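(* Let $\eta>0$ and $W\ge0$. Let $x_t^{s}$ ($t\in[T]$, $t-W\le s\le t$) be the iterates of RHGD, and let $x^{(k)}$ be the iterates of offline projected gradient descent $$x_t^{(k)}=\Pi_X\big(x_t^{(k-1)}-\eta\, g_t(x_{t-1}^{(k-1)},x_t^{(k-1)},x_{t+1}^{(k-1)})\big),\quad t\in[T],\ k\ge1,$$ with $x_0^{(k)}=x_0$, both using the same stepsize $\eta$. If $x_t^{(0)}=x_t^{t-W}$ for all $t\in[T]$, then $x_t^{(W)}=x_t^t$ for all $t\in[T]$.
   Context: $X\subseteq\mathbb R^n$ is compact and convex, $\Pi_X$ is Euclidean projection onto $X$, $\beta\ge0$, $x_0\in X$, and $f_1,\dots,f_T:\mathbb R^n\to\mathbb R$ are differentiable. Partial gradients: for $t<T$, $g_t(a,b,c)=\nabla f_t(b)+\beta(2b-a-c)$; for $t=T$, $g_T(a,b,c)=\nabla f_T(b)+\beta(b-a)$, which does not depend on $c$. These are the partial gradients of $C_1^T(x)=\sum_t(f_t(x_t)+\frac\beta2\|x_t-x_{t-1}\|^2)$ with respect to $x_t$. RHGD with window $W$, stepsizes $\gamma,\eta$: - Initialization: $x_1^{1-W}=x_0$, and $x_t^{t-W}=\Pi_X(x_{t-1}^{t-1-W}-\gamma\nabla f_{t-1}(x_{t-1}^{t-1-W}))$ for $2\le t\le T$. - Updates: for $s=t-W+1,\dots,t$, $x_t^s=\Pi_X(x_t^{s-1}-\eta g_t(x_{t-1}^{s-2},x_t^{s-1},x_{t+1}^{s}))$, with the convention $x_0^s=x_0$.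 - Output at stage $t$: $x_t^t$. *)

From HB Require Import structures.
From mathcomp Require Import all_boot all_order all_algebra.
From mathcomp Require Import all_classical all_reals all_analysis.
Set Implicit Arguments. Unset Strict Implicit. Unset Printing Implicit Defensive.
Import Order.TTheory GRing.Theory Num.Theory.
Import numFieldNormedType.Exports.
Local Open Scope classical_set_scope.
Local Open Scope ring_scope.

Section Defs.
Variables (R : realType) (n : nat).

Definition sqdist (y z : 'rV[R]_n) : R := \sum_(i < n) (y 0 i - z 0 i) ^+ 2.

Definition is_euclid_proj (X : set 'rV[R]_n) (P : 'rV[R]_n -> 'rV[R]_n) : Prop :=
  forall y, X (P y) /\ forall z, X z -> sqdist y (P y) <= sqdist y z.

Definition grad (f : 'rV[R]_n -> R) (x : 'rV[R]_n) : 'rV[R]_n :=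
  \row_(i < n) 'D_(delta_mx 0 i) f x.

(* partial gradients g_t of C_1^T w.r.t. x_t; for t = T the argument c is ignored *)
Definition gpart (T : nat) (beta : R) (f : nat -> 'rV[R]_n -> R) (t : nat)
    (a b c : 'rV[R]_n) : 'rV[R]_n :=
  if (t < T)%N then grad (f t) b + beta *: (2%:R *: b - a - c)
  else grad (f t) b + beta *: (b - a).

End Defs.

From HB Require Import structures.
From mathcomp Require Import all_boot all_order all_algebra.
From mathcomp Require Import all_classical all_reals all_analysis.
From mathcomp Require Import zify.
Import Order.TTheory GRing.Theory Num.Theory.
Import numFieldNormedType.Exports.
Local Open Scope classical_set_scope.
Local Open Scope ring_scope.

(* RHGD is offline gradient descent run along anti-diagonals: x_t^s with
   s = t - W + k plays the role of the k-th offline iterate of x_t.  The update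
   of x_t^s reads x_(t-1)^(s-2) and x_(t+1)^s, which sit on the k-1-st diagonal
   of their own stages, exactly like the offline step k reads step k-1.  Only
   the update rule matters (never the projection or the gradients), except that
   at the last stage the rule must ignore the missing right neighbour. *)

Section DiagonalSchedule.

Variables (V : Type) (T W : nat) (step : nat -> V -> V -> V -> V).
Hypothesis step_last : forall a b c c', step T a b c = step T a b c'.

Variables (x : nat -> int -> V) (y : nat -> nat -> V).
Hypothesis boundary : forall k s, y 0%N k = x 0%N s.
Hypothesis x_step : forall (t : nat) (s : int), (1 <= t <= T)%N ->
  t%:Z - W%:Z + 1 <= s <= t%:Z ->
  x t s = step t (x t.-1 (s - 2)) (x t (s - 1)) (x t.+1 s).
Hypothesis y_step : forall t k, (1 <= t <= T)%N ->
  y t k.+1 = step t (y t.-1 k) (y t k) (y t.+1 k).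
Hypothesis y_init : forall t, (1 <= t <= T)%N -> y t 0%N = x t (t%:Z - W%:Z).

Lemma offline_eq_diagonal k : (k <= W)%N -> forall t, (1 <= t <= T)%N ->
  y t k = x t (t%:Z - W%:Z + k%:Z).
Proof.
elim: k => [|k IH] lt_kW t ht; first by rewrite addr0 y_init.
have {}IH : forall t', (1 <= t' <= T)%N -> y t' k = x t' (t'%:Z - W%:Z + k%:Z).
  by apply: IH; apply: ltnW.
have left : y t.-1 k = x t.-1 (t%:Z - W%:Z + k.+1%:Z - 2).
  case: t ht => [|[|t]] ht; [by [] | exact: boundary |].
  by rewrite IH; [congr (x _ _); lia | lia].
have middle : y t k = x t (t%:Z - W%:Z + k.+1%:Z - 1).
  by rewrite IH //; congr (x _ _); lia.
have right : forall a b,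
    step t a b (y t.+1 k) = step t a b (x t.+1 (t%:Z - W%:Z + k.+1%:Z)).
  move=> a b; have [lt_tT | le_Tt] := ltnP t T.
    by rewrite (IH t.+1); [congr (step _ _ _ (x _ _)); lia | lia].
  have -> : t = T by lia.
  exact: step_last.
rewrite y_step // left middle right -x_step //.
by apply/andP; split; lia.
Qed.

Lemma offline_last_eq_online t : (1 <= t <= T)%N -> y t W = x t t%:Z.
Proof. by move=> ht; rewrite offline_eq_diagonal // subrK. Qed.

End DiagonalSchedule.

Theorem lemma2 (R : realType) (n T W : nat) (X : set 'rV[R]_n)
  (P : 'rV[R]_n -> 'rV[R]_n) (f : nat -> 'rV[R]_n -> R)
  (beta gamma eta : R) (x0 : 'rV[R]_n)
  (x : nat -> int -> 'rV[R]_n)   (* RHGD iterates: x t s = x_t^s *)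
  (y : nat -> nat -> 'rV[R]_n) :  (* offline PGD iterates: y t k = x_t^(k) *)
  compact X -> convex_set X -> is_euclid_proj X P ->
  0 <= beta -> X x0 ->
  (forall t z, differentiable (f t) z) ->
  0 < eta ->
  (* RHGD: convention x_0^s = x0 *)
  (forall s, x 0%N s = x0) ->
  (* RHGD initialization *)
  x 1%N (1 - W%:Z) = x0 ->
  (forall t : nat, (2 <= t <= T)%N ->
     x t (t%:Z - W%:Z) =
       P (x t.-1 (t.-1%:Z - W%:Z)
          - gamma *: grad (f t.-1) (x t.-1 (t.-1%:Z - W%:Z)))) ->
  (* RHGD updates *)
  (forall (t : nat) (s : int), (1 <= t <= T)%N ->
     t%:Z - W%:Z + 1 <= s <= t%:Z ->
     x t s = P (x t (s - 1)
                - eta *: gpart T beta f t (x t.-1 (s - 2)) (x t (s - 1)) (x t.+1 s))) ->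
  (* offline projected gradient descent *)
  (forall k, y 0%N k = x0) ->
  (forall (t k : nat), (1 <= t <= T)%N -> (1 <= k)%N ->
     y t k = P (y t k.-1
                - eta *: gpart T beta f t (y t.-1 k.-1) (y t k.-1) (y t.+1 k.-1))) ->
  (* common initialization *)
  (forall t : nat, (1 <= t <= T)%N -> y t 0%N = x t (t%:Z - W%:Z)) ->
  forall t : nat, (1 <= t <= T)%N -> y t W = x t t%:Z.
Proof.
move=> _ _ _ _ _ _ _ x_bnd _ _ x_step y_bnd y_step y_init.
pose pgd_step t a b c := P (b - eta *: gpart T beta f t a b c).
apply: (@offline_last_eq_online _ T W pgd_step _ x y).
- by move=> a b c c'; rewrite /pgd_step /gpart ltnn.
- by move=> k s; rewrite x_bnd y_bnd.
- exact: x_step.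
- by move=> t k ht; apply: y_step.
- exact: y_init.
Qed.
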